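(* In any finite discounted stochastic game, the following are equivalent: (a) $\bm{\Pi}_{\rm cumber}=\bm{\Pi}_{\rm eq}$; (b) the game is weakly acyclic under multi-DM strict best replies. Moreover, in any finite discounted stochastic game, for every $\bm{\pi}\in\bm{\Pi}\setminus\bm{\Pi}_{\rm cumber}$ there is a multi-DM strict best reply path starting at $\bm{\pi}$ and ending in $\bm{\Pi}_{\rm cumber}$.
   Context: Game setup: finite discounted stochastic game with $N$ decision makers, finite state set $\mathbb{X}$, finite action sets $\mathbb{U}^i$, discount factors $\beta^i\in(0,1)$, costs $c^i:\mathbb{X}\times\mathbb{U}\to\mathbb{R}$, transition kernel $P$. $\Pi^i$ = set of maps $\mathbb{X}\to\mathbb{U}^i$, $\bm{\Pi}=\times_i\Pi^i$, $\bm{\pi}=(\pi^i,\bm{\pi}^{-i})$; $J^i_x(\bm{\pi})=E[\sum_{t\ge0}(\beta^i)^tc^i(x_t,\bm{\pi}(x_t))\mid x_0=x]$ with $x_{t+1}\sim P(\cdot\mid x_t,\bm{\pi}(x_t))$. $\pi^i$ is a best reply to $\bm{\pi}^{-i}$ if $J^i_x(\pi^i,\bm{\pi}^{-i})=\min_{\sigma^i\in\Pi^i}J^i_x(\sigma^i,\bm{\pi}^{-i})$ $\forall x$; a best reply $\tilde\pi^i$ is a strict best reply with respect to $\bm{\pi}=(\pi^i,\bm{\pi}^{-i})$ if $J^i_x(\tilde\pi^i,\bm{\pi}^{-i})<J^i_x(\pi^i,\bm{\pi}^{-i})$ for some $x$. $\bm{\Pi}_{\rm eq}=\{\bm{\pi}:\pi^i$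 is a best reply to $\bm{\pi}^{-i}\ \forall i\}$. A multi-DM strict best reply path is a sequence $\bm{\pi}_0,\bm{\pi}_1,\dots$ with $\bm{\pi}_k\ne\bm{\pi}_{k+1}$ and, for each $i$ with $\pi^i_{k+1}\ne\pi^i_k$, $\pi^i_{k+1}$ a strict best reply with respect to $\bm{\pi}_k$. The game is weakly acyclic (under multi-DM strict best replies) if from every $\bm{\pi}\in\bm{\Pi}$ there is a multi-DM strict best reply path starting at $\bm{\pi}$ and ending at some element of $\bm{\Pi}_{\rm eq}$ (a path of length zero is allowed if $\bm{\pi}\in\bm{\Pi}_{\rm eq}$). For $\bm{\pi}\in\bm{\Pi}$, $\widetilde{BR}(\bm{\pi})=\{\tilde{\bm{\pi}}\in\bm{\Pi}:$ for every $i$, $\tilde\pi^i\ne\pi^i\Rightarrow\tilde\pi^i$ is a strict best reply with respect to $\bm{\pi}\}$. A nonempty $\tilde{\bm{\Pi}}\subseteq\bm{\Pi}$ is a cumber set if $\bm{\pi}\in\tilde{\bm{\Pi}}\Rightarrow\widetilde{BR}(\bm{\pi})\subseteq\tilde{\bm{\Pi}}$; it is minimal if it properly contains no other cumber set. $\bm{\Pi}_{\rm cumber}$ is the union of all minimal cumber sets. *)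

From mathcomp Require Import all_boot.
From Stdlib Require Import Reals ClassicalEpsilon.

Set Implicit Arguments.
Unset Strict Implicit.
Unset Printing Implicit Defensive.

Local Open Scope R_scope.

Section Game.
Variable N : nat.
Variable X : finType.
Variable U : 'I_N -> finType.
Variable beta : 'I_N -> R.
Variable c : 'I_N -> X -> (forall i, U i) -> R.
Variable P : X -> (forall i, U i) -> X -> R.         (* transition kernel P(y | x, u) *)

Definition sumR (T : finType) (f : T -> R) : R := \big[Rplus/0]_(t : T) f t.

Definition is_kernel : Prop :=
  (forall x u y, 0 <= P x u y) /\ (forall x u, sumR (fun y => P x u y) = 1).

(* stationary deterministic policy of DM i: a map X -> U^i; joint policy *)
Definition policy (i : 'I_N) := X -> U i.
Definition profile := forall i : 'I_N, policy i.

Definition joint (pi : profile) (x : X) : forall i, U i := fun i => pi i x.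

Fixpoint dist (pi : profile) (x0 : X) (t : nat) : X -> R :=
  match t with
  | O => fun y => if y == x0 then 1 else 0
  | S t' => fun y => sumR (fun z => dist pi x0 t' z * P z (joint pi z) y)
  end.

Definition cost_term (i : 'I_N) (pi : profile) (x0 : X) (t : nat) : R :=
  (beta i) ^ t * sumR (fun y => dist pi x0 t y * c i y (joint pi y)).

Definition J (i : 'I_N) (pi : profile) (x0 : X) : R :=
  epsilon (inhabits 0) (fun v => infinite_sum (cost_term i pi x0) v).

Definition upd (pi : profile) (i : 'I_N) (s : policy i) : profile := dfwith pi s.

Definition best_reply (i : 'I_N) (s : policy i) (pi : profile) : Prop :=
  forall x, forall s' : policy i, J i (upd pi s) x <= J i (upd pi s') x.

Definition strict_best_reply (i : 'I_N) (s : policy i) (pi : profile) : Prop :=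
  best_reply s pi /\ exists x, J i (upd pi s) x < J i pi x.

Definition is_eq (pi : profile) : Prop := forall i, best_reply (pi i) pi.

Definition BRt (pi pi' : profile) : Prop :=
  forall i, pi' i <> pi i -> strict_best_reply (pi' i) pi.

Definition sbr_step (pi pi' : profile) : Prop := pi <> pi' /\ BRt pi pi'.

Inductive sbr_path : profile -> profile -> Prop :=
  | sbr_path_nil : forall pi, sbr_path pi pi
  | sbr_path_cons : forall pi pi' pi'', sbr_step pi pi' -> sbr_path pi' pi'' ->
      sbr_path pi pi''.

Definition weakly_acyclic : Prop :=
  forall pi, exists pe, sbr_path pi pe /\ is_eq pe.

Definition cumber_set (C : profile -> Prop) : Prop :=
  (exists pi, C pi) /\ (forall pi pi', C pi -> BRt pi pi' -> C pi').

Definition minimal_cumber_set (C : profile -> Prop) : Prop :=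
  cumber_set C /\
  forall C', cumber_set C' -> (forall p, C' p -> C p) ->
    ~ (exists p, C p /\ ~ C' p).

Definition in_cumber (pi : profile) : Prop :=
  exists C, minimal_cumber_set C /\ C pi.

End Game.

(* The theorem is purely order-theoretic: nothing about costs or kernels is
   used beyond the fact that an equilibrium admits no strict best reply.
   Write [Reach p] for the set of profiles reachable from [p] along
   multi-DM strict best reply paths.
   - [Reach p] is a cumber set, and every cumber set is closed under paths.
   - An equilibrium [pe] is a fixed point of the one-step relation [BRt], so
     [{pe}] is a cumber set; hence it is minimal, and any minimal cumber set
     containing [pe] equals [{pe}].  In particular Pi_eq is inside Pi_cumber.
   - There are finitely many profiles.  If [Reach p] is not minimal, some
     smaller cumber set inside it misses a profile, and its elements reach
     strictly fewer profiles than [p] does.  Induction on the number of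
     reachable profiles gives a path from any [p] to some [s] whose
     reachable set is a minimal cumber set; so every profile reaches
     Pi_cumber (second part of the theorem).
   - Equivalence: if Pi_cumber = Pi_eq, the previous point gives weak
     acyclicity; conversely, a profile in a minimal cumber set that reaches
     an equilibrium [pe] stays in that set, which must be [{pe}]. *)

From mathcomp Require Import all_boot.
From Stdlib Require Import Reals Lra Classical ClassicalEpsilon FunctionalExtensionality.

Set Implicit Arguments.
Unset Strict Implicit.

Section CumberSets.
Variable N : nat.
Variable X : finType.
Variable U : 'I_N -> finType.
Variable beta : 'I_N -> R.
Variable c : 'I_N -> X -> (forall i, U i) -> R.
Variable P : X -> (forall i, U i) -> X -> R.

Notation prof := (@profile N X U).
Notation Reach := (sbr_path beta c P).
Notation BR := (BRt beta c P).
Notation cumber := (cumber_set beta c P).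
Notation minimal := (minimal_cumber_set beta c P).
Notation equilibrium := (is_eq beta c P).

Lemma upd_self (p : prof) i : upd p (p i) = p.
Proof.
apply: functional_extensionality_dep => j; rewrite /upd.
by case: (eqVneq i j) => [<-|nij]; [rewrite dfwith_in | rewrite dfwith_out].
Qed.

(* Nobody has a strict best reply at an equilibrium, so the only element
   of BR~(pe) is pe itself. *)
Lemma equilibrium_BRt_fixed (pe p : prof) : equilibrium pe -> BR pe p -> p = pe.
Proof.
move=> Heq Hbr; apply: functional_extensionality_dep => i.
apply: NNPP => Hne; have [_ [x Hx]] := Hbr i Hne.
have := Heq i x (p i); rewrite upd_self; lra.
Qed.

Lemma equilibrium_singleton_cumber (pe : prof) :
  equilibrium pe -> cumber (fun q => q = pe).
Proof.
move=> Heq; split; first by exists pe.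
by move=> q q' -> Hbr; exact: equilibrium_BRt_fixed Hbr.
Qed.

Lemma path_trans (p q r : prof) : Reach p q -> Reach q r -> Reach p r.
Proof.
elim=> [//|pi pi' pi'' Hstep _ IH] Hqr.
exact: sbr_path_cons Hstep (IH Hqr).
Qed.

Lemma reach_cumber (p : prof) : cumber (Reach p).
Proof.
split; first by exists p; exact: sbr_path_nil.
move=> q q' Hpq Hbr; case: (classic (q = q')) => [<-//|Hne].
exact: path_trans Hpq (sbr_path_cons (conj Hne Hbr) (sbr_path_nil _ _ _ _)).
Qed.

Lemma cumber_path (C : prof -> Prop) p q : cumber C -> C p -> Reach p q -> C q.
Proof.
move=> [_ HC] Hp Hpq; elim: Hpq Hp => [//|pi pi' pi'' [_ Hbr] _ IH] Hp.
exact: IH (HC _ _ Hp Hbr).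
Qed.

Lemma minimal_cumber_equilibrium (C : prof -> Prop) (pe p : prof) :
  minimal C -> C pe -> equilibrium pe -> C p -> p = pe.
Proof.
move=> [_ Hmin] HCpe Heq HCp; apply: NNPP => Hne.
apply: (Hmin _ (equilibrium_singleton_cumber Heq)); first by move=> q ->.
by exists p.
Qed.

Lemma equilibrium_in_cumber (pe : prof) : equilibrium pe -> in_cumber beta c P pe.
Proof.
move=> Heq; exists (fun q => q = pe); split => //; split.
  exact: equilibrium_singleton_cumber.
move=> C' [[q Hq] _] Hsub [r [-> HnC']]; apply: HnC'.
by rewrite -(Hsub _ Hq).
Qed.

Definition fin_profile := {dffun forall i : 'I_N, {ffun X -> U i}}.
Definition encode (p : prof) : fin_profile := [ffun i => [ffun x => p i x]].

Lemma encode_inj : injective encode.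
Proof.
move=> p q Hpq; apply: functional_extensionality_dep => i.
apply: functional_extensionality => x.
by have := congr1 (fun f : fin_profile => f i x) Hpq; rewrite !ffunE.
Qed.

Definition classic_bool (Q : Prop) : bool :=
  if excluded_middle_informative Q then true else false.

Lemma classic_boolP (Q : Prop) : classic_bool Q <-> Q.
Proof. by rewrite /classic_bool; case: excluded_middle_informative. Qed.

Definition reach_set (p : prof) : {set fin_profile} :=
  [set t | classic_bool (exists q, Reach p q /\ encode q = t)].
Definition reach_card (p : prof) : nat := #|reach_set p|.

Lemma reach_card_gt0 (p : prof) : (0 < reach_card p)%N.
Proof.
rewrite /reach_card card_gt0; apply/set0Pn; exists (encode p).
by rewrite inE; apply/classic_boolP; exists p; split => //; exact: sbr_path_nil.
Qed.

Lemma reach_card_lt (p q r : prof) :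
  Reach p q -> Reach p r -> ~ Reach q r -> (reach_card q < reach_card p)%N.
Proof.
move=> Hpq Hpr Hqr; apply: proper_card; apply/properP; split.
  apply/subsetP => t; rewrite !inE => /classic_boolP [q' [Hqq' <-]].
  by apply/classic_boolP; exists q'; split => //; exact: path_trans Hpq Hqq'.
exists (encode r); first by rewrite inE; apply/classic_boolP; exists r.
rewrite inE; apply/negP => /classic_boolP [q' [Hqq' /encode_inj Hq'r]].
by apply: Hqr; rewrite -Hq'r.
Qed.

Lemma reach_shrinks (p : prof) :
  ~ minimal (Reach p) -> exists q, Reach p q /\ (reach_card q < reach_card p)%N.
Proof.
move=> Hnmin.
have [C' [HC' [Hsub [r [Hpr HnC'r]]]]] : exists C', cumber C' /\
    (forall q, C' q -> Reach p q) /\ exists r, Reach p r /\ ~ C' r.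
  apply: NNPP => Hno; apply: Hnmin; split; first exact: reach_cumber.
  by move=> C' HC' Hsub Hex; apply: Hno; exists C'.
have [[q HC'q] _] := HC'.
exists q; split; first exact: Hsub.
apply: (reach_card_lt (Hsub _ HC'q) Hpr) => Hqr.
by apply: HnC'r; exact: cumber_path HC' HC'q Hqr.
Qed.

Lemma reach_minimal (p : prof) : exists s, Reach p s /\ minimal (Reach s).
Proof.
move: {2}(reach_card p) (leqnn (reach_card p)) => n.
elim: n p => [|n IH] p Hcard.
  by have := reach_card_gt0 p; rewrite ltnNge Hcard.
case: (classic (minimal (Reach p))) => Hmin.
  by exists p; split => //; exact: sbr_path_nil.
have [q [Hpq Hlt]] := reach_shrinks Hmin.
have [s [Hqs Hmin_s]] := IH q (ltnSE (leq_trans Hlt Hcard)).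
by exists s; split => //; exact: path_trans Hpq Hqs.
Qed.

Lemma path_to_cumber (p : prof) : exists p', Reach p p' /\ in_cumber beta c P p'.
Proof.
have [s [Hps Hmin]] := reach_minimal p.
exists s; split => //; exists (Reach s); split => //; exact: sbr_path_nil.
Qed.

End CumberSets.

Unset Implicit Arguments.
Local Open Scope R_scope.

Theorem mainTheorem5 (N : nat) (X : finType) (U : 'I_N -> finType)
  (beta : 'I_N -> R) (c : 'I_N -> X -> (forall i, U i) -> R)
  (P : X -> (forall i, U i) -> X -> R)
  (hbeta : forall i, 0 < beta i < 1)
  (hP : is_kernel P) :
  ((forall pi, in_cumber beta c P pi <-> is_eq beta c P pi)
     <-> weakly_acyclic beta c P) /\
  (forall pi, ~ in_cumber beta c P pi ->
     exists pi', sbr_path beta c P pi pi' /\ in_cumber beta c P pi').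
Proof.
split; last by move=> pi _; exact: path_to_cumber.
split => [Hcum_eq pi | Hwa pi].
- have [pe [Hpath Hcum]] := path_to_cumber beta c P pi.
  by exists pe; split => //; exact/Hcum_eq.
- split; last exact: equilibrium_in_cumber.
  move=> [C [Hmin HCpi]]; have [pe [Hpath Heq]] := Hwa pi.
  have HCpe := cumber_path Hmin.1 HCpi Hpath.
  by rewrite (minimal_cumber_equilibrium Hmin HCpe Heq HCpi).
Qed.
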